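(* Let an instance be given with $x_i,r_i\in\mathbb{N}$ for all $i=1,\dots,n$ and $L\in\mathbb{N}$, and suppose it admits a feasible solution. Then there exists a minimum-cost feasible solution $y$ with $y_i\in\mathbb{Z}$ for every $i$.
   Context: A solution is $y\in\mathbb{R}^n$; sensor $i$ at $y_i$ covers $[y_i-r_i,y_i+r_i]$; $y$ is feasible if $[0,L]\subseteq\bigcup_i[y_i-r_i,y_i+r_i]$; its cost is $\sum_i|y_i-x_i|$. *)

From Stdlib Require Import Reals List.
Open Scope R_scope.

(* An instance: n sensors, sensor i (0 <= i < n) has position x i and radius r i
   (natural numbers), and the segment to cover is [0, L].
   A solution is y : nat -> R, of which only the entries y 0, ..., y (n-1) matter. *)

Definition feasible (n : nat) (r : nat -> nat) (L : nat) (y : nat -> R) : Prop :=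
  forall t : R, 0 <= t <= INR L ->
    exists i : nat, (i < n)%nat /\ y i - INR (r i) <= t <= y i + INR (r i).

Definition cost (n : nat) (x : nat -> nat) (y : nat -> R) : R :=
  fold_right Rplus 0 (map (fun i => Rabs (y i - INR (x i))) (seq 0 n)).

From Stdlib Require Import Reals ZArith List Lia Lra Classical RList Wf_nat.
Open Scope R_scope.

(* Since the x_i, r_i and L are integers, feasibility of y only depends on how
   the fractional parts of the y_i are ordered among themselves.  Let f be the largest
   fractional part and f' the next smaller one (or 0).  Shifting all y_i with
   fractional part f by the same d, as long as f + d stays in [f', 1], keeps the
   solution feasible and changes the cost affinely in d; one of the two extreme
   shifts therefore does not increase the cost, and it merges the top class
   either with the integers or with the class f'.  After finitely many such
   steps the solution is integral, and integral solutions have natural costs,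
   among which there is a least one. *)

Lemma IZR_lt_plus1_le (m k : Z) : IZR m < IZR k + 1 -> IZR m <= IZR k.
Proof. intros H; rewrite <- plus_IZR in H; apply lt_IZR in H; apply IZR_le; lia. Qed.

Lemma IZR_lt_le_minus1 (m k : Z) : IZR m < IZR k -> IZR m <= IZR k - 1.
Proof. intros H; apply lt_IZR in H; rewrite <- minus_IZR; apply IZR_le; lia. Qed.

Lemma Int_part_in_segment (t : R) (L : nat) : 0 <= t <= INR L ->
  0 <= IZR (Int_part t) /\ (0 < frac_part t -> IZR (Int_part t) + 1 <= INR L).
Proof.
  intros Ht; pose proof (base_Int_part t); unfold frac_part; split.
  - apply (IZR_lt_plus1_le 0); lra.
  - intros Hu; rewrite INR_IZR_INZ in *.
    assert (IZR (Int_part t) <= IZR (Z.of_nat L) - 1) by (apply IZR_lt_le_minus1; lra).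
    lra.
Qed.

Lemma Rminus_INR_decomp (v : R) (m : nat) :
  v - INR m = IZR (Int_part v - Z.of_nat m) + frac_part v.
Proof. unfold frac_part; rewrite minus_IZR, <- INR_IZR_INZ; ring. Qed.

Lemma Rplus_INR_decomp (v : R) (m : nat) :
  v + INR m = IZR (Int_part v + Z.of_nat m) + frac_part v.
Proof. unfold frac_part; rewrite plus_IZR, <- INR_IZR_INZ; ring. Qed.

(* A point of [lo + phi, hi + phi] at offset c from the integer k certifies that
   the point at offset u lies in [lo + psi, hi + psi], provided u and psi sit on
   the same side of each other as c and phi do. *)
Lemma interval_cover_transfer (lo hi k : Z) (phi psi c u : R) :
  0 <= phi < 1 -> 0 <= c < 1 -> 0 <= psi <= 1 -> 0 <= u <= 1 ->
  (phi <= c -> psi <= u) -> (c <= phi -> u <= psi) ->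
  IZR lo + phi <= IZR k + c <= IZR hi + phi ->
  IZR lo + psi <= IZR k + u <= IZR hi + psi.
Proof.
  intros Hphi Hc Hpsi Hu Hle Hge [Hlo Hhi]; split.
  - destruct (Rle_lt_dec phi c) as [H|H].
    + assert (IZR lo <= IZR k) by (apply IZR_lt_plus1_le; lra).
      specialize (Hle H); lra.
    + assert (IZR lo <= IZR k - 1) by (apply IZR_lt_le_minus1; lra); lra.
  - destruct (Rle_lt_dec c phi) as [H|H].
    + assert (IZR k <= IZR hi) by (apply IZR_lt_plus1_le; lra).
      specialize (Hge H); lra.
    + assert (IZR k <= IZR hi - 1) by (apply IZR_lt_le_minus1; lra); lra.
Qed.

Lemma Rabs_shift_within_unit (v d : R) (X : Z) :
  0 <= frac_part v + d <= 1 ->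
  Rabs (v + d - IZR X) =
  Rabs (v - IZR X) + d * (if Z_le_dec X (Int_part v) then 1 else -1).
Proof.
  intros Hd; pose proof (Rplus_Int_part_frac_part v); pose proof (base_fp v).
  destruct (Z_le_dec X (Int_part v)) as [HX|HX].
  - apply IZR_le in HX; rewrite !Rabs_right by lra; ring.
  - assert (IZR (Int_part v) <= IZR X - 1) by (apply IZR_lt_le_minus1, IZR_lt; lia).
    rewrite !Rabs_left1 by lra; ring.
Qed.

Lemma fold_right_Rplus_map_affine (l : list nat) (F G s : nat -> R) (d : R) :
  (forall i, In i l -> G i = F i + d * s i) ->
  fold_right Rplus 0 (map G l) =
  fold_right Rplus 0 (map F l) + d * fold_right Rplus 0 (map s l).
Proof.
  induction l as [|i l IHl]; intros H; simpl; [ring|].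
  rewrite IHl, (H i); [ring | simpl; auto |].
  intros j Hj; apply H; simpl; auto.
Qed.

Lemma fold_right_Rplus_map_INR (l : list nat) (F : nat -> R) :
  (forall i, In i l -> exists k : nat, F i = INR k) ->
  exists N : nat, fold_right Rplus 0 (map F l) = INR N.
Proof.
  induction l as [|i l IHl]; intros H; simpl; [exists 0%nat; reflexivity|].
  destruct IHl as [N HN]; [intros j Hj; apply H; simpl; auto|].
  destruct (H i) as [k Hk]; [simpl; auto|].
  exists (k + N)%nat; rewrite HN, Hk, plus_INR; reflexivity.
Qed.

Definition max0_upto (g : nat -> R) (n : nat) : R := MaxRlist (0 :: map g (seq 0 n)).

Lemma max0_upto_spec (g : nat -> R) (n : nat) :
  0 <= max0_upto g n /\ (forall i, (i < n)%nat -> g i <= max0_upto g n) /\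
  (max0_upto g n = 0 \/ exists i, (i < n)%nat /\ g i = max0_upto g n).
Proof.
  unfold max0_upto; split; [|split].
  - apply MaxRlist_P1; simpl; auto.
  - intros i Hi; apply MaxRlist_P1; right; apply in_map, in_seq; lia.
  - destruct (MaxRlist_P2 (0 :: map g (seq 0 n))) as [H|H]; [exists 0; simpl; auto|auto|].
    apply in_map_iff in H; destruct H as [i [Hg Hi]]; apply in_seq in Hi.
    right; exists i; split; [lia|auto].
Qed.

Lemma top_frac_class (n : nat) (y : nat -> R) (l : list R) :
  (forall i, (i < n)%nat -> frac_part (y i) = 0 \/ In (frac_part (y i)) l) ->
  (exists i, (i < n)%nat /\ frac_part (y i) <> 0) ->
  exists f f', 0 <= f' < f /\ f < 1 /\ In f l /\
    (f' = 0 \/ In f' (remove Req_dec_T f l)) /\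
    forall i, (i < n)%nat -> frac_part (y i) = f \/ frac_part (y i) <= f'.
Proof.
  intros Hl [i0 [Hi0 Hfrac0]].
  set (f := max0_upto (fun i => frac_part (y i)) n).
  set (f' := max0_upto (fun i => if Rlt_dec (frac_part (y i)) f
                                 then frac_part (y i) else 0) n).
  destruct (max0_upto_spec (fun i => frac_part (y i)) n) as [Hf0 [Hfub Hfat]].
  destruct (max0_upto_spec (fun i => if Rlt_dec (frac_part (y i)) f
                                     then frac_part (y i) else 0) n)
    as [Hf'0 [Hf'ub Hf'at]].
  fold f f' in Hf0, Hfub, Hfat, Hf'0, Hf'ub, Hf'at.
  assert (Hf : 0 < f) by (pose proof (base_fp (y i0)); specialize (Hfub i0 Hi0); simpl in Hfub; lra).
  destruct Hfat as [|[i1 [Hi1 Hf1]]]; [lra|]; simpl in Hf1.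
  assert (Hfl : In f l) by (destruct (Hl i1 Hi1) as [H|H]; rewrite Hf1 in H; [lra|auto]).
  exists f, f'; split; [|split; [|split; [auto|split]]].
  - split; [auto|].
    destruct Hf'at as [->|[j [_ Hj]]]; [auto|].
    destruct (Rlt_dec (frac_part (y j)) f); lra.
  - pose proof (base_fp (y i1)); lra.
  - destruct Hf'at as [|[j [Hj Hjf']]]; [auto|].
    destruct (Rlt_dec (frac_part (y j)) f) as [Hlt|]; [|auto].
    destruct (Hl j Hj) as [H|H]; [left; lra|right].
    rewrite <- Hjf'; apply in_in_remove; [lra|auto].
  - intros i Hi; destruct (Req_dec_T (frac_part (y i)) f); [left; auto|right].
    specialize (Hfub i Hi); specialize (Hf'ub i Hi); simpl in *.
    destruct (Rlt_dec (frac_part (y i)) f); lra.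
Qed.

Definition shift_class (y : nat -> R) (f d : R) (i : nat) : R :=
  y i + (if Req_dec_T (frac_part (y i)) f then d else 0).

Section TopClassShift.

Variables (n L : nat) (x r : nat -> nat) (y : nat -> R) (f f' : R).
Hypothesis Hf' : 0 <= f' < f.
Hypothesis Hf1 : f < 1.
Hypothesis Hgap : forall i, (i < n)%nat -> frac_part (y i) = f \/ frac_part (y i) <= f'.

Lemma feasible_shift_class (d : R) : f' <= f + d <= 1 ->
  feasible n r L y -> feasible n r L (shift_class y f d).
Proof.
  intros Hd Hfeas t Ht.
  pose proof (Rplus_Int_part_frac_part t) as Htk; pose proof (base_fp t) as Hu.
  destruct (Int_part_in_segment t L Ht) as [Hk0 HkL].
  set (k := Int_part t) in *; set (u := frac_part t) in *.
  (* Query the covering of y at a point k + c lying, relative to every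
     fractional part of y, on the side where t lies relative to the shifted one. *)
  assert (Hsample : exists c, 0 <= c < 1 /\ 0 <= IZR k + c <= INR L /\
            (c = u \/ f' < c /\ f' < u) /\
            (f <= c -> f + d <= u) /\ (c <= f -> u <= f + d)).
  { destruct (Rle_lt_dec u f') as [H1|H1]; [exists u; lra|].
    specialize (HkL ltac:(lra)).
    destruct (Rle_lt_dec u (f + d)); [exists ((f' + f) / 2) | exists ((f + 1) / 2)]; lra. }
  destruct Hsample as [c [Hc [Hs [Hfixed [Hup Hdown]]]]].
  destruct (Hfeas (IZR k + c) Hs) as [j [Hj Hcov]].
  exists j; split; [exact Hj|]; unfold shift_class.
  pose proof (Rminus_INR_decomp (y j) (r j)) as Hlo.
  pose proof (Rplus_INR_decomp (y j) (r j)) as Hhi.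
  pose proof (base_fp (y j)).
  rewrite Hlo, Hhi in Hcov.
  set (lo := (Int_part (y j) - Z.of_nat (r j))%Z) in *.
  set (hi := (Int_part (y j) + Z.of_nat (r j))%Z) in *.
  destruct (Req_dec_T (frac_part (y j)) f) as [Hjf|Hjf].
  - rewrite Hjf in Hcov.
    assert (IZR lo + (f + d) <= IZR k + u <= IZR hi + (f + d))
      by (apply (interval_cover_transfer lo hi k f (f + d) c u); lra).
    lra.
  - destruct (Hgap j Hj) as [|Hjf']; [contradiction|].
    assert (IZR lo + frac_part (y j) <= IZR k + u <= IZR hi + frac_part (y j))
      by (apply (interval_cover_transfer lo hi k (frac_part (y j)) (frac_part (y j)) c u); lra).
    lra.
Qed.

Lemma cost_shift_class_affine : exists S, forall d, f' <= f + d <= 1 ->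
  cost n x (shift_class y f d) = cost n x y + d * S.
Proof.
  exists (fold_right Rplus 0 (map (fun i =>
    if Req_dec_T (frac_part (y i)) f
    then (if Z_le_dec (Z.of_nat (x i)) (Int_part (y i)) then 1 else -1) else 0) (seq 0 n))).
  intros d Hd; unfold cost.
  apply fold_right_Rplus_map_affine; intros i Hi; apply in_seq in Hi.
  unfold shift_class; destruct (Req_dec_T (frac_part (y i)) f) as [Hif|Hif].
  - rewrite INR_IZR_INZ; apply Rabs_shift_within_unit; lra.
  - rewrite Rplus_0_r, Rmult_0_r, Rplus_0_r; reflexivity.
Qed.

Lemma exists_shift_class_no_worse : feasible n r L y ->
  exists d, (d = 1 - f \/ d = f' - f) /\
    feasible n r L (shift_class y f d) /\ cost n x (shift_class y f d) <= cost n x y.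
Proof.
  intros Hfeas; destruct cost_shift_class_affine as [S HS].
  destruct (Rle_lt_dec S 0) as [HS0|HS0]; [exists (1 - f) | exists (f' - f)];
    (split; [lra|split; [apply feasible_shift_class; [lra|exact Hfeas]|rewrite HS by lra]]).
  - assert (0 <= 1 - f) by lra; nra.
  - assert (f' - f <= 0) by lra; nra.
Qed.

Lemma frac_part_shift_class (d : R) (i : nat) : (d = 1 - f \/ d = f' - f) ->
  frac_part (y i) <> f /\ frac_part (shift_class y f d i) = frac_part (y i) \/
  frac_part (shift_class y f d i) = 0 \/ frac_part (shift_class y f d i) = f'.
Proof.
  intros Hd; unfold shift_class.
  destruct (Req_dec_T (frac_part (y i)) f) as [Hif|Hif];
    [right | left; rewrite Rplus_0_r; auto].
  rewrite (Rplus_Int_part_frac_part (y i)), Hif.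
  destruct Hd as [-> | ->]; [left | right].
  - symmetry; apply (Int_part_frac_part_spec _ (Int_part (y i) + 1)); [lra|].
    rewrite plus_IZR; ring.
  - symmetry; apply (Int_part_frac_part_spec _ (Int_part (y i))); [lra|ring].
Qed.

End TopClassShift.

Lemma exists_frac_free_no_worse (n L : nat) (x r : nat -> nat) (l : list R) :
  forall y, feasible n r L y ->
  (forall i, (i < n)%nat -> frac_part (y i) = 0 \/ In (frac_part (y i)) l) ->
  exists y', feasible n r L y' /\ cost n x y' <= cost n x y /\
    forall i, (i < n)%nat -> frac_part (y' i) = 0.
Proof.
  induction l as [l IH] using (well_founded_induction (well_founded_ltof _ (@length R))).
  intros y Hfeas Hl.
  destruct (classic (exists i, (i < n)%nat /\ frac_part (y i) <> 0)) as [Hfrac|Hint].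
  2: { exists y; repeat split; [auto|lra|].
       intros i Hi; apply NNPP; intros H; apply Hint; eauto. }
  destruct (top_frac_class n y l Hl Hfrac)
    as [f [f' [Hf' [Hf1 [Hfl [Hf'l Hgap]]]]]].
  destruct (exists_shift_class_no_worse n L x r y f f' Hf' Hf1 Hgap Hfeas)
    as [d [Hd [Hfeas' Hcost]]].
  destruct (IH (remove Req_dec_T f l)) with (y := shift_class y f d)
    as [y' [Hfeas'' [Hcost' Hint]]]; [apply remove_length_lt; auto|auto| |].
  - intros i Hi.
    destruct (frac_part_shift_class y f f' Hf' Hf1 d i Hd) as [[Hif ->]|[->| ->]]; auto.
    destruct (Hl i Hi) as [|Hil]; [auto|right].
    apply in_in_remove; auto.
  - exists y'; split; [auto|split; [lra|auto]].
Qed.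

Lemma exists_integral_no_worse (n L : nat) (x r : nat -> nat) (y : nat -> R) :
  feasible n r L y ->
  exists y', feasible n r L y' /\ cost n x y' <= cost n x y /\
    forall i, (i < n)%nat -> exists z : Z, y' i = IZR z.
Proof.
  intros Hfeas.
  destruct (exists_frac_free_no_worse n L x r (map (fun i => frac_part (y i)) (seq 0 n)) y Hfeas)
    as [y' [Hfeas' [Hcost Hint]]].
  - intros i Hi; right; apply (in_map (fun i => frac_part (y i))), in_seq; lia.
  - exists y'; repeat split; auto.
    intros i Hi; apply fp_nat, Hint, Hi.
Qed.

Lemma cost_integral_INR (n : nat) (x : nat -> nat) (y : nat -> R) :
  (forall i, (i < n)%nat -> exists z : Z, y i = IZR z) ->
  exists N : nat, cost n x y = INR N.
Proof.
  intros Hint; apply fold_right_Rplus_map_INR; intros i Hi; apply in_seq in Hi.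
  destruct (Hint i ltac:(lia)) as [z ->].
  exists (Z.abs_nat (z - Z.of_nat (x i))).
  rewrite INR_IZR_INZ, INR_IZR_INZ, Nat2Z.inj_abs_nat, <- minus_IZR, Rabs_Zabs.
  reflexivity.
Qed.

Theorem lemmaA1 (n : nat) (x r : nat -> nat) (L : nat) :
  (exists y0 : nat -> R, feasible n r L y0) ->
  exists y : nat -> R,
    feasible n r L y /\
    (forall y' : nat -> R, feasible n r L y' -> cost n x y <= cost n x y') /\
    (forall i : nat, (i < n)%nat -> exists z : Z, y i = IZR z).
Proof.
  intros [y0 Hy0].
  set (P := fun N : nat => exists y, feasible n r L y /\
              (forall i, (i < n)%nat -> exists z : Z, y i = IZR z) /\ cost n x y = INR N).
  assert (HP : forall y, feasible n r L y -> exists N, P N /\ INR N <= cost n x y).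
  { intros y Hy.
    destruct (exists_integral_no_worse n L x r y Hy) as [y' [Hy' [Hcost Hint]]].
    destruct (cost_integral_INR n x y' Hint) as [N HN].
    exists N; split; [exists y'; auto | lra]. }
  destruct (HP y0 Hy0) as [N0 [HN0 _]].
  destruct (dec_inh_nat_subset_has_unique_least_element P (fun N => classic (P N))
              (ex_intro _ N0 HN0)) as [M [[[y [Hy [Hint HM]]] Hmin] _]].
  exists y; split; [exact Hy|split; [|exact Hint]].
  intros y' Hy'; destruct (HP y' Hy') as [K [HK HKcost]].
  pose proof (le_INR _ _ (Hmin K HK)); lra.
Qed.
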